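(* Let $X$ be a real Banach space with $\dim X\ge 2$. (i) If $S_P(X)=\tfrac12$, then $X$ is not uniformly convex. (ii) If $S_P(X)=\tfrac12$ and $X$ is finite-dimensional, then $X$ is not strictly convex.
   Context: For a real Banach space $X$ with unit sphere $S_X$, the P-angle constant is $S_P(X)=\sup\left\{\frac{\|x+y\|^2+\|x-y\|^2-4}{2\|x+y\|\,\|x-y\|}: x,y\in S_X,\ x\neq \pm y\right\}$. $X$ is uniformly convex if for every $\varepsilon\in(0,2]$ there is $\delta>0$ such that $x,y\in S_X$ and $\|x-y\|\ge\varepsilon$ imply $\frac{\|x+y\|}{2}\le 1-\delta$. $X$ is strictly convex if $x,y\in S_X$, $x\ne y$ imply $\|x+y\|<2$. *)

From HB Require Import structures.
From mathcomp Require Import all_boot all_order all_algebra.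
From mathcomp Require Import all_classical all_reals all_analysis.
Set Implicit Arguments. Unset Strict Implicit. Unset Printing Implicit Defensive.
Import Order.TTheory GRing.Theory Num.Theory.
Import numFieldNormedType.Exports.
Local Open Scope classical_set_scope.
Local Open Scope ring_scope.

Definition P_angle_constant (R : realType) (X : normedModType R) : \bar R :=
  ereal_sup [set r : \bar R | exists x y : X,
     [/\ `|x| = 1, `|y| = 1, x != y, x != - y &
      r = ((`|x + y| ^+ 2 + `|x - y| ^+ 2 - 4) /
           (2 * `|x + y| * `|x - y|))%:E]].

Definition uniformly_convex (R : realType) (X : normedModType R) : Prop :=
  forall eps : R, 0 < eps <= 2 ->
    exists2 delta : R, 0 < delta &
      forall x y : X, `|x| = 1 -> `|y| = 1 -> eps <= `|x - y| ->
        `|x + y| / 2 <= 1 - delta.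

Definition strictly_convex (R : realType) (X : normedModType R) : Prop :=
  forall x y : X, `|x| = 1 -> `|y| = 1 -> x != y -> `|x + y| < 2.

Definition dim_ge2 (R : realType) (X : normedModType R) : Prop :=
  exists x y : X, forall a b : R, a *: x + b *: y = 0 -> a = 0 /\ b = 0.

Definition finite_dim (R : realType) (X : normedModType R) : Prop :=
  exists (n : nat) (e : 'I_n -> X),
    forall x : X, exists c : 'I_n -> R, x = \sum_(i < n) c i *: e i.

From HB Require Import structures.
From mathcomp Require Import all_boot all_order all_algebra.
From mathcomp Require Import all_classical all_reals all_analysis.
From mathcomp Require Import ring lra.
Import Order.TTheory GRing.Theory Num.Theory.
Import numFieldNormedType.Exports.
Set Implicit Arguments.
Unset Strict Implicit.
Unset Printing Implicit Defensive.

Local Open Scope classical_set_scope.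
Local Open Scope ring_scope.

(* For unit vectors x, y put a = |x + y| and b = |x - y|, both in (0, 2].  The
   quantity in S_P(X) is at most min(a, b) / 4 <= 1/2, so S_P(X) = 1/2 forces
   unit vectors with |x + y| and |x - y| both arbitrarily close to 2: X is not
   uniformly non-square.  A uniformly convex space is uniformly non-square, and
   so is a strictly convex space with compact unit sphere, because
   |x + y| + |x - y| then attains a maximum on pairs of unit vectors, and a
   maximum of 4 would give a square, i.e. a segment on the sphere. *)

Definition uniformly_non_square (R : realType) (X : normedModType R) : Prop :=
  exists2 delta : R, 0 < delta &
    forall x y : X, `|x| = 1 -> `|y| = 1 ->
      `|x + y| / 2 <= 1 - delta \/ `|x - y| / 2 <= 1 - delta.

Section FiniteDimensional.
Variables (R : realType) (X : normedModType R).

Definition spanning {n} (e : 'I_n -> X) :=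
  forall x : X, exists c : 'I_n -> R, x = \sum_(i < n) c i *: e i.

Definition lin_indep {n} (e : 'I_n -> X) :=
  forall c : 'I_n -> R, \sum_(i < n) c i *: e i = 0 -> forall i, c i = 0.

Lemma spanning_basis_exists n (e : 'I_n -> X) :
  spanning e -> exists n' (e' : 'I_n' -> X), spanning e' /\ lin_indep e'.
Proof.
elim: n e => [|n IH] e e_span.
  by exists 0%N, e; split => // c _ [].
have [e_indep|e_dep] := pselect (lin_indep e); first by exists n.+1, e.
have [c [c_rel [j cj0]]] : exists c : 'I_n.+1 -> R,
    \sum_(i < n.+1) c i *: e i = 0 /\ exists j, c j != 0.
  apply: contra_notP e_dep => no_rel c c_rel i; apply: contra_notP no_rel => ci.
  by exists c; split => //; exists i; apply/eqP.
apply: (IH (fun k => e (lift j k))) => x.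
have [d ->] := e_span x.
have ej : c j *: e j = - \sum_(k < n) c (lift j k) *: e (lift j k).
  by apply/eqP; rewrite -addr_eq0; move: c_rel; rewrite (bigD1_ord j) // => ->.
exists (fun k => d (lift j k) - d j / c j * c (lift j k)).
rewrite (bigD1_ord j) //= -[e j](scalerK cj0) scalerA ej scalerN scaler_sumr.
rewrite addrC -sumrN -big_split /=; apply: eq_bigr => k _.
by rewrite scalerBl scalerA.
Qed.

Definition lincomb {n} (e : 'I_n -> X) (a : 'rV[R]_n) : X :=
  \sum_(i < n) a ord0 i *: e i.

Lemma lincomb_continuous n (e : 'I_n -> X) : continuous (lincomb e).
Proof.
move=> a.
rewrite [lincomb e](_ : _ = \sum_(i < n) (fun b : 'rV[R]_n => b ord0 i *: e i)).
  elim/big_ind: _ => [|f g|i _]; first exact: cst_continuous.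
    by move=> fc gc; apply: continuousD.
  by apply: continuousZr_tmp; exact: coord_continuous.
by apply/funext => b; rewrite fct_sumE.
Qed.

Lemma norm_lincomb_continuous n (e : 'I_n -> X) :
  continuous (fun a => `|lincomb e a|).
Proof.
by move=> a; apply: continuous_comp; [exact: lincomb_continuous|exact: norm_continuous].
Qed.

Lemma lincombZ n (e : 'I_n -> X) (k : R) (a : 'rV[R]_n) :
  lincomb e (k *: a) = k *: lincomb e a.
Proof. by rewrite /lincomb scaler_sumr; apply: eq_bigr => i _; rewrite mxE scalerA. Qed.

(* m is the minimum of |lincomb e| on the compact unit sphere of R^n. *)
Lemma lincomb_norm_lower_bound n (e : 'I_n -> X) :
  lin_indep e -> exists2 m : R, 0 < m & forall a, m * `|a| <= `|lincomb e a|.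
Proof.
move=> e_indep.
pose S := [set a : 'rV[R]_n | `|a| = 1].
have homogeneous m : 0 < m -> (forall b, S b -> m <= `|lincomb e b|) ->
    forall a, m * `|a| <= `|lincomb e a|.
  move=> m0 mS a; have [->|a0] := eqVneq a 0; first by rewrite normr0 mulr0.
  have na0 : 0 < `|a| by rewrite normr_gt0.
  have /mS : S (`|a|^-1 *: a) by rewrite /S /= normrZ normfV normr_id mulVf ?gt_eqF.
  by rewrite lincombZ normrZ normfV normr_id ler_pdivlMl // mulrC.
have [[a0 Sa0]|S0] := pselect (S !=set0); last first.
  by exists 1 => //; apply: homogeneous => // b Sb; case: S0; exists b.
have S_compact : compact S.
  apply: bounded_closed_compact; first by exists 1; split => // M M1 x /= ->; exact: ltW.
  exact: (preimage_closed (fun a _ => @norm_continuous _ _ a) (@closed_eq R 1)).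
have [c /set_mem Sc c_min] := compact_EVT_min (ex_intro _ a0 Sa0) S_compact
  (continuous_subspaceT (@norm_lincomb_continuous _ e)).
have c_gt0 : 0 < `|lincomb e c|.
  rewrite normr_gt0; apply: contraPneq Sc => /(e_indep (c ord0)) c0.
  have -> : c = 0 by apply/matrixP => i j; rewrite ord1 mxE c0.
  by rewrite /S /= normr0 => /esym/eqP; rewrite oner_eq0.
exists `|lincomb e c| => //.
by apply: homogeneous => // b Sb; apply: c_min; apply/mem_set.
Qed.

Lemma finite_dim_compact_unit_sphere :
  finite_dim X -> compact [set x : X | `|x| = 1].
Proof.
move=> [n0 [e0 /spanning_basis_exists [n [e [e_span e_indep]]]]].
have [m m0 e_bound] := lincomb_norm_lower_bound e_indep.
pose C := ([set a : 'rV[R]_n | `|a| <= m^-1] `&`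
           [set a | `|lincomb e a| = 1]).
have -> : [set x : X | `|x| = 1] = lincomb e @` C.
  apply/seteqP; split => [x /= x1|_ [a [_ a1] <-] //].
  have [c xc] := e_span x.
  have cx : lincomb e (\row_i c i) = x.
    by rewrite xc /lincomb; apply: eq_bigr => i _; rewrite mxE.
  exists (\row_i c i) => //; split; last by rewrite /= cx.
  by rewrite /= -(ler_pM2l m0) mulfV ?gt_eqF // -x1 -cx e_bound.
apply: continuous_compact; first exact/continuous_subspaceT/lincomb_continuous.
apply: compact_closedI.
  apply: bounded_closed_compact.
    exists m^-1; split; first exact: num_real.
    by move=> M mM a /= am; exact: le_trans am (ltW mM).
  exact: preimage_closed (fun a _ => @norm_continuous _ _ a) (@closed_le R m^-1).
apply: preimage_closed (@closed_eq R 1) => a _; exact: norm_lincomb_continuous.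
Qed.

End FiniteDimensional.

Lemma addB_norm_continuous (R : realType) (X : normedModType R) :
  continuous (fun p : X * X => `|p.1 + p.2| + `|p.1 - p.2|).
Proof.
move=> p.
have fst_cont : continuous (@fst X X) by move=> q; exact: cvg_fst.
have snd_cont : continuous (@snd X X) by move=> q; exact: cvg_snd.
have add_cont : {for p, continuous (fun q : X * X => q.1 + q.2)}.
  exact: (@continuousD _ _ _ fst snd p (fst_cont p) (snd_cont p)).
have sub_cont : {for p, continuous (fun q : X * X => q.1 - q.2)}.
  exact: (@continuousD _ _ _ fst (fun q => - q.2) p (fst_cont p)
           (continuousN (snd_cont p))).
apply: (@continuousD _ _ _ (fun q : X * X => `|q.1 + q.2|) (fun q => `|q.1 - q.2|) p);
  apply: continuous_comp; by [exact: add_cont|exact: sub_cont|exact: norm_continuous].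
Qed.

Lemma P_angle_quotient_le (R : realFieldType) (a b : R) :
  0 < a -> 0 < b -> a <= 2 -> b <= 2 -> (a ^+ 2 + b ^+ 2 - 4) / (2 * a * b) <= a / 4.
Proof.
move=> a_gt0 b_gt0 a_le2 b_le2; rewrite ler_pdivrMr ?mulr_gt0 //.
have : (b - 2) * (b + 2 - a ^+ 2 / 2) <= 0.
  by apply: mulr_le0_ge0; [lra|nra].
nra.
Qed.

Lemma P_angle_half_not_uniformly_non_square (R : realType) (X : normedModType R) :
  ((2^-1 : R)%:E <= P_angle_constant X)%E -> ~ uniformly_non_square X.
Proof.
move=> SP_ge [d d_gt0 X_uns].
have /ereal_sup_gt [_ [x [y [x1 y1 xNy xNNy ->]]]] :
    ((2^-1 - d / 2)%:E < P_angle_constant X)%E.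
  by apply: lt_le_trans SP_ge; rewrite lte_fin; lra.
rewrite lte_fin => SP_gt.
have sum_le2 : `|x + y| <= 2 by rewrite (le_trans (ler_normD _ _)) // x1 y1.
have diff_le2 : `|x - y| <= 2 by rewrite (le_trans (ler_normB _ _)) // x1 y1.
have sum_gt0 : 0 < `|x + y| by rewrite normr_gt0 addr_eq0.
have diff_gt0 : 0 < `|x - y| by rewrite normr_gt0 subr_eq0.
have := P_angle_quotient_le sum_gt0 diff_gt0 sum_le2 diff_le2.
have := P_angle_quotient_le diff_gt0 sum_gt0 diff_le2 sum_le2.
rewrite (addrC (`|x - y| ^+ 2)) (mulrAC 2 `|x - y|).
by case: (X_uns x y x1 y1); lra.
Qed.

Lemma uniformly_convex_uniformly_non_square (R : realType) (X : normedModType R) :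
  uniformly_convex X -> uniformly_non_square X.
Proof.
move=> /(_ 1 ltac:(lra)) [d d_gt0 X_uc].
have min_gt0 : 0 < Num.min d 2^-1 by rewrite lt_min d_gt0 invr_gt0 ltr0n.
have min_le : Num.min d 2^-1 <= d /\ Num.min d 2^-1 <= 2^-1.
  by rewrite !ge_min !lexx orbT.
exists (Num.min d 2^-1) => // x y x1 y1.
have [diff_lt1|diff_ge1] := ltP `|x - y| 1; first by right; lra.
by left; have := X_uc x y x1 y1 diff_ge1; lra.
Qed.

Lemma compact_sphere_strictly_convex_uniformly_non_square
    (R : realType) (X : normedModType R) :
  compact [set x : X | `|x| = 1] -> strictly_convex X -> uniformly_non_square X.
Proof.
set S := [set x : X | `|x| = 1] => S_compact X_sc.
have [[x0 Sx0]|S0] := pselect (S !=set0); last first.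
  by exists 1 => // x y x1; case: S0; exists x.
have [[u v] /set_mem [/= u1 v1] uv_max] := compact_EVT_max
  (ex_intro _ (x0, x0) (conj Sx0 Sx0)) (compact_setX S_compact S_compact)
  (continuous_subspaceT (@addB_norm_continuous _ X)).
have sum_le2 : `|u + v| <= 2 by rewrite (le_trans (ler_normD _ _)) // u1 v1.
have diff_le2 : `|u - v| <= 2 by rewrite (le_trans (ler_normB _ _)) // u1 v1.
have max_lt4 : `|u + v| + `|u - v| < 4.
  rewrite ltNge; apply/negP => max_ge4.
  have uNv : u != v by rewrite -subr_eq0 -normr_gt0; lra.
  by have := X_sc u v u1 v1 uNv; lra.
exists ((4 - (`|u + v| + `|u - v|)) / 4); first lra.
move=> x y x1 y1; have /= := uv_max (x, y) (mem_set (conj x1 y1)).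
have [sum_le|diff_le] := leP `|x + y| `|x - y|; [left|right]; lra.
Qed.

Theorem proposition5p6 (R : realType) (X : completeNormedModType R) :
  dim_ge2 X ->
  (P_angle_constant X = (2^-1 : R)%:E -> ~ uniformly_convex X) /\
  (P_angle_constant X = (2^-1 : R)%:E -> finite_dim X -> ~ strictly_convex X).
Proof.
move=> _; split => [SP_half X_uc | SP_half X_fd X_sc];
  (apply: (@P_angle_half_not_uniformly_non_square _ X); first by rewrite SP_half).
- exact: uniformly_convex_uniformly_non_square.
- exact: compact_sphere_strictly_convex_uniformly_non_square
    (finite_dim_compact_unit_sphere X_fd) X_sc.
Qed.
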